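(* Let $d\ge1$, $m=2^d$, and $x\in[0,\infty)^m$ with first positive index $i^*$. Then $\mathrm{SPiRiT}_\infty(x)=S\,P\,i_\infty\big(R\, i_\infty(Tx)\big)\in\{0,1\}^d$ is the binary representation of $i^*-1$ if $i^*\ge1$, and is the zero vector if $i^*=0$.
   Context: Let $m=2^d$. Consider the complete binary tree with nodes indexed $1,\dots,2m-1$: node $1$ is the root, node $k\in[m-1]$ has left child $2k$ and right child $2k+1$; leaf number $i\in[m]$ is node $m+i-1$. For $i\in[m]$ let $\mathrm{Anc}(i)=\{\lfloor (m+i-1)/2^h\rfloor: h=0,\dots,d\}$ and $\mathrm{Lop}(i)=\{k-1: k\in \mathrm{Anc}(i),\ k\text{ odd},\ k\ge 3\}$. Tree matrix $T\in\{0,1\}^{(2m-1)\times m}$: $T(k,i)=1$ iff $k\in\mathrm{Anc}(i)$. Roots matrix $R\in\{0,1\}^{m\times(2m-1)}$: for $j\in[m-1]$, $R(j,k)=1$ iff $k\in\mathrm{Lop}(j+1)$; row $m$ of $R$ is the indicator vector of $\{1\}$. Pairwise matrix $P\in\{-1,0,1\}^{m\times m}$: $(Pu)(1)=u(1)$ and $(Pu)(k)=u(k)-u(k-1)$ for $k\ge 2$. Sketch matrix $S\in\{0,1\}^{d\times m}$: $S(h,k)$ is the $h$-th bit (coefficient of $2^{h-1}$) of $k-1$. For a real vector $y$, $i_\infty(y)$ is the $0/1$ vector with entry $1$ exactly where $y$ is nonzero. The first positive index of $x\in[0,\infty)^m$ is the smallest $i\in[m]$ with $x(i)>0$, or $0$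 if $x=0$. ''Binary representation of $n$'' means the vector whose $h$-th entry is the coefficient of $2^{h-1}$ in $n$. *)

From HB Require Import structures.
From mathcomp Require Import all_boot all_order all_algebra.
Set Implicit Arguments. Unset Strict Implicit. Unset Printing Implicit Defensive.
Import Order.TTheory GRing.Theory Num.Theory.

(* Convention: the paper uses 1-based indices; MathComp ordinals are 0-based.
   Entry (i, j) of each matrix below (i, j ordinals) is the paper's entry
   (i+1, j+1).  The boolean helpers Tb, Rb, Pb, Sb take 1-based indices. *)

(* T(k,i) = 1 iff k in Anc(i) = { floor((m+i-1)/2^h) : h = 0..d } *)
Definition Tb (d k i : nat) : bool :=
  [exists h : 'I_d.+1, k == (2 ^ d + i - 1) %/ 2 ^ h].

Definition Rb (d j k : nat) : bool :=
  if j < 2 ^ d then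
    [exists h : 'I_d.+1,
       let a := (2 ^ d + j.+1 - 1) %/ 2 ^ h in [&& odd a, 3 <= a & k == a - 1]]
  else k == 1.

Definition Sb (h k : nat) : bool := odd ((k - 1) %/ 2 ^ (h - 1)).

Section Mats.
Variable R : realFieldType.
Local Open Scope ring_scope.

Definition Tmx (d : nat) : 'M[R]_((2 * 2 ^ d - 1)%N, 2 ^ d) :=
  \matrix_(k, i) (Tb d k.+1 i.+1)%:R.

Definition Rmx (d : nat) : 'M[R]_(2 ^ d, (2 * 2 ^ d - 1)%N) :=
  \matrix_(j, k) (Rb d j.+1 k.+1)%:R.

Definition Pentry (k l : nat) : R :=
  if l == k then 1 else if (2 <= k)%N && (l == k - 1)%N then -1 else 0.

Definition Pmx (d : nat) : 'M[R]_(2 ^ d) :=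
  \matrix_(k, l) Pentry k.+1 l.+1.

Definition Smx (d : nat) : 'M[R]_(d, 2 ^ d) :=
  \matrix_(h, k) (Sb h.+1 k.+1)%:R.

Definition iinf (p q : nat) (y : 'M[R]_(p, q)) : 'M[R]_(p, q) :=
  map_mx (fun a => (a != 0)%:R) y.

Definition SPiRiT (d : nat) (x : 'cV[R]_(2 ^ d)) : 'cV[R]_d :=
  Smx d *m (Pmx d *m iinf (Rmx d *m iinf (Tmx d *m x))).

Definition first_pos (n : nat) (x : 'cV[R]_n) : nat :=
  let k := find (fun i : 'I_n => 0 < x i 0) (enum 'I_n) in
  if (k < n)%N then k.+1 else 0%N.

Definition binrep (d n : nat) : 'cV[R]_d :=
  \col_(h < d) (odd (n %/ 2 ^ h))%:R.

End Mats.

From HB Require Import structures.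
From mathcomp Require Import all_boot all_order all_algebra zify.
Import Order.TTheory GRing.Theory Num.Theory.
Set Implicit Arguments. Unset Strict Implicit.

(* Node k of the tree carries a nonzero entry of Tx iff its subtree contains a
   positive leaf.  For j < m the left siblings Lop(j+1) of the right-child
   ancestors of leaf j+1 root subtrees that together contain exactly the leaves
   1..j, and row m of R selects the root; hence i_oo(R i_oo(Tx)) is the
   indicator of the leaves j >= i*.  P turns this step vector into the unit
   vector at i*, and S maps that to its column, the binary digits of i*-1. *)

Lemma leaf_ancestor_level d h n : h <= d -> 2 ^ d <= n < 2 ^ d.+1 ->
  2 ^ (d - h) <= n %/ 2 ^ h < 2 ^ (d.+1 - h).
Proof.
move=> le_hd /andP[n_ge n_lt]; rewrite leq_divRL ?expn_gt0 // ltn_divLR ?expn_gt0 //.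
by rewrite -!expnD !subnK // ?n_ge ?n_lt // (leq_trans le_hd).
Qed.

Lemma left_sibling_ancestor_lt d p q h h' : h <= d -> h' <= d ->
    2 ^ d <= p < 2 ^ d.+1 -> 2 ^ d <= q < 2 ^ d.+1 ->
    odd (p %/ 2 ^ h') -> 3 <= p %/ 2 ^ h' -> p %/ 2 ^ h' - 1 = q %/ 2 ^ h ->
  q < p.
Proof.
move=> le_hd le_h'd p_leaf q_leaf odd_a a_ge3 sibling.
have /andP[a_ge a_lt] := leaf_ancestor_level le_h'd p_leaf.
have /andP[b_ge b_lt] := leaf_ancestor_level le_hd q_leaf.
have a_gt : 2 ^ (d - h') < p %/ 2 ^ h'.
  rewrite ltn_neqAle a_ge andbT; apply/eqP=> a_pow; move: odd_a a_ge3.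
  by rewrite -a_pow oddX orbF => /eqP->.
(* the two ancestors lie on the same level of the tree *)
have : 2 ^ (d - h') < 2 ^ (d.+1 - h) /\ 2 ^ (d - h) < 2 ^ (d.+1 - h') by lia.
rewrite !ltn_exp2l // => -[lt1 lt2].
have eq_hh' : h = h' by lia.
subst h'; have : q %/ 2 ^ h < p %/ 2 ^ h by lia.
by apply: contraTT; rewrite -!leqNgt; apply: leq_div2r.
Qed.

(* [h.+1] is the height of the lowest common ancestor of the leaves [q < p]. *)
Lemma left_sibling_ancestor_exists d p q : 2 ^ d <= q -> q < p -> p < 2 ^ d.+1 ->
  exists2 h, h < d &
    [/\ odd (p %/ 2 ^ h), 3 <= p %/ 2 ^ h & p %/ 2 ^ h - 1 = q %/ 2 ^ h].
Proof.
move=> q_ge lt_qp p_lt.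
have root_of n : 2 ^ d <= n < 2 ^ d.+1 -> n %/ 2 ^ d = 1.
  by move=> /(leaf_ancestor_level (leqnn d)); rewrite subnn subSn // subnn; lia.
have p_root : p %/ 2 ^ d = 1 by apply: root_of; lia.
have q_root : q %/ 2 ^ d = 1 by apply: root_of; lia.
have common : exists n, p %/ 2 ^ n == q %/ 2 ^ n by exists d; rewrite p_root q_root.
case: (ex_minnP common) => -[|h] same min_same.
  by move: same; rewrite !divn1 => /eqP eq_pq; rewrite eq_pq ltnn in lt_qp.
have le_hd : h.+1 <= d by apply: min_same; rewrite p_root q_root.
have diff : p %/ 2 ^ h != q %/ 2 ^ h by apply/negP=> /min_same; rewrite ltnn.
have le_qp : q %/ 2 ^ h <= p %/ 2 ^ h by apply/leq_div2r/ltnW.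
have parent_ge1 : 1 <= p %/ 2 ^ h.+1.
  rewrite leq_divRL ?expn_gt0 // mul1n (leq_trans _ (ltnW lt_qp)) //.
  by rewrite (leq_trans _ q_ge) // leq_exp2l.
move: same parent_ge1; rewrite expnSr !divnMA => /eqP.
move: diff le_qp; set u := q %/ 2 ^ h; set v := p %/ 2 ^ h => diff le_qp same ge1.
have : v %% 2 = 1 by lia.
rewrite modn2 => odd_v.
by exists h => //; split; [case: (odd v) odd_v | lia | lia].
Qed.

Lemma TbE d k i : Tb d k i.+1 = [exists h : 'I_d.+1, k == (2 ^ d + i) %/ 2 ^ h].
Proof. by rewrite /Tb addnS subn1. Qed.

Lemma RbE_lt d j k : j.+1 < 2 ^ d -> Rb d j.+1 k =
  [exists h : 'I_d.+1, let a := (2 ^ d + j.+1) %/ 2 ^ h in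
                       [&& odd a, 3 <= a & k == a - 1]].
Proof. by move=> lt_jd; rewrite /Rb lt_jd addnS subn1. Qed.

Lemma Rb_Tb_cover d (j i : 'I_(2 ^ d)) :
  [exists k : 'I_(2 * 2 ^ d - 1), Rb d j.+1 k.+1 && Tb d k.+1 i.+1] = (i <= j).
Proof.
have lt_i := ltn_ord i; have lt_j := ltn_ord j.
have exp2S : 2 ^ d.+1 = 2 * 2 ^ d by rewrite expnS.
have [lt_jd | ge_jd] := ltnP j.+1 (2 ^ d); last first.
  have -> : i <= j by lia.
  have root_node : 0 < 2 * 2 ^ d - 1 by have := expn_gt0 2 d; lia.
  apply/existsP; exists (Ordinal root_node); rewrite /Rb ltnNge ge_jd /= TbE.
  apply/existsP; exists ord_max => /=.
  by rewrite divnDl // divnn expn_gt0 divn_small.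
apply/existsP/idP => [[k /andP[]] | le_ij].
  rewrite RbE_lt // TbE => /existsP[h' /and3P[odd_a a_ge3 /eqP k_eq]].
  case/existsP=> h /eqP k_eq'.
  suff : 2 ^ d + i < 2 ^ d + j.+1 by rewrite ltn_add2l.
  apply: (left_sibling_ancestor_lt (h := h) (h' := h')) odd_a a_ge3 _.
  - by rewrite -ltnS.
  - by rewrite -ltnS.
  - rewrite exp2S; apply/andP; split; [exact: leq_addr | lia].
  - rewrite exp2S; apply/andP; split; [exact: leq_addr | lia].
  - by rewrite -k_eq -k_eq'.
have [h lt_hd [odd_a a_ge3 sibling]] :=
  @left_sibling_ancestor_exists d (2 ^ d + j.+1) (2 ^ d + i) (leq_addr _ _)
    ltac:(rewrite ltn_add2l; lia) ltac:(rewrite exp2S; lia).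
set a := (2 ^ d + j.+1) %/ 2 ^ h in odd_a a_ge3 sibling.
have lt_k : a.-2 < 2 * 2 ^ d - 1.
  have : a <= 2 ^ d + j.+1 by apply: leq_div.
  lia.
have lt_h : h < d.+1 by apply: ltnW.
exists (Ordinal lt_k); rewrite RbE_lt // TbE; apply/andP; split; apply/existsP;
  exists (Ordinal lt_h) => /=.
- by rewrite -/a odd_a a_ge3 /=; apply/eqP; lia.
- by rewrite -sibling; apply/eqP; lia.
Qed.

Local Open Scope ring_scope.

Section ZeroOneProducts.
Variable R : realFieldType.

Lemma iinf_ge0 p q (y : 'M[R]_(p, q)) i j : 0 <= iinf y i j.
Proof. by rewrite mxE ler0n. Qed.

Lemma iinf_gt0 p q (y : 'M[R]_(p, q)) i j : (0 < iinf y i j) = (y i j != 0).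
Proof. by rewrite mxE ltr0n lt0b. Qed.

Lemma mulmx_bool_neq0 p q (B : 'I_p -> 'I_q -> bool) (M : 'M[R]_(p, q))
    (v : 'cV[R]_q) i :
    (forall i k, M i k = (B i k)%:R) -> (forall k, 0 <= v k 0) ->
  ((M *m v) i 0 != 0) = [exists k, B i k && (0 < v k 0)].
Proof.
move=> ME v_ge0; rewrite mxE psumr_neq0 => [|k _]; last by rewrite ME mulr_ge0.
apply/hasP/existsP => -[k] => [_ | /andP[Bik v_gt0]]; last first.
  by exists k; rewrite ?mem_index_enum // ME Bik mul1r.
by rewrite ME; case Bik: (B i k); rewrite ?mul1r ?mul0r ?ltxx // => v_gt0;
  exists k; rewrite Bik.
Qed.

End ZeroOneProducts.

Section FirstPositive.
Variables (R : realFieldType) (n : nat) (x : 'cV[R]_n).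

Variant first_pos_spec : nat -> Type :=
  | FirstPosNone of (forall i, ~~ (0 < x i 0)) : first_pos_spec 0
  | FirstPosSome (c : 'I_n) of
      0 < x c 0 & (forall i : 'I_n, (i < c)%N -> ~~ (0 < x i 0)) : first_pos_spec c.+1.

Lemma first_posP : first_pos_spec (first_pos x).
Proof.
rewrite /first_pos; set P := fun i : 'I_n => 0 < x i 0.
case: (boolP (has P (enum 'I_n))) => [has_pos | no_pos].
  have lt_c := has_pos; rewrite has_find size_enum_ord in lt_c.
  rewrite lt_c; apply: (FirstPosSome (c := Ordinal lt_c)).
    have := nth_find (Ordinal lt_c) has_pos.
    by rewrite (_ : nth _ _ _ = Ordinal lt_c) //; apply/val_inj/nth_enum_ord.
  move=> i lt_ic; have := before_find i lt_ic.
  by rewrite nth_ord_enum => /negbT.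
have := no_pos; rewrite has_find size_enum_ord => /negbTE ->.
by constructor=> i; apply: contra no_pos => x_gt0; apply/hasP; exists i; rewrite ?mem_enum.
Qed.

Lemma exists_pos_le (c : 'I_n) :
    0 < x c 0 -> (forall i : 'I_n, (i < c)%N -> ~~ (0 < x i 0)) ->
  forall j : 'I_n, [exists i : 'I_n, (i <= j)%N && (0 < x i 0)] = (c <= j)%N.
Proof.
move=> xc_gt0 before_c j; apply/existsP/idP => [[i /andP[le_ij xi_gt0]] | le_cj].
  by rewrite leqNgt; apply: contraL xi_gt0 => lt_jc; apply/before_c/(leq_ltn_trans le_ij).
by exists c; rewrite le_cj.
Qed.

End FirstPositive.

Section DifferenceAndSketch.
Variables (R : realFieldType) (d : nat).

Lemma PentrySS k l : Pentry R k.+1 l.+1 = (l == k)%:R - (l.+1 == k)%:R.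
Proof.
rewrite /Pentry eqSS subn1 /=; case: eqP => [-> | _]; first by rewrite gtn_eqF ?subr0.
by case: eqP => [<- | _]; rewrite ?andbT ?andbF /= ?sub0r ?subr0 ?oppr0.
Qed.

Lemma Pmx_step (c : 'I_(2 ^ d)) :
  Pmx R d *m \col_j ((c <= j)%N%:R) = delta_mx c 0.
Proof.
apply/matrixP => l z; rewrite ord1 !mxE eqxx andbT.
under eq_bigr do rewrite !mxE PentrySS mulrBl.
rewrite sumrB (bigD1 l) //= eqxx mul1r big1 ?addr0 => [|j]; last first.
  by rewrite -val_eqE => /negPf->; rewrite mul0r.
case: l => [[|l] lt_l] /=.
  by rewrite big1 => [|j _]; rewrite ?mul0r // subr0 -val_eqE /= leqn0 eq_sym.
have lt_l' := ltnW lt_l.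
rewrite (bigD1 (Ordinal lt_l')) //= eqxx mul1r big1 ?addr0 => [|j]; last first.
  by rewrite -val_eqE eqSS => /negPf->; rewrite mul0r.
rewrite -val_eqE /=; case: (ltngtP c l.+1) => [lt_cl | lt_lc | ->].
- by rewrite -ltnS lt_cl subrr.
- by rewrite leqNgt (ltn_trans _ lt_lc) // subrr.
- by rewrite ltnn subr0.
Qed.

Lemma Smx_delta (c : 'I_(2 ^ d)) : Smx R d *m delta_mx c 0 = binrep R d c.
Proof. by rewrite -colE; apply/matrixP => h z; rewrite !mxE /Sb !subn1. Qed.

End DifferenceAndSketch.

Section Pipeline.
Variables (R : realFieldType) (d : nat) (x : 'cV[R]_(2 ^ d)).
Hypothesis x_ge0 : forall i, 0 <= x i 0.

Lemma Tmx_mul_neq0 k :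
  ((Tmx R d *m x) k 0 != 0) = [exists i : 'I_(2 ^ d), Tb d k.+1 i.+1 && (0 < x i 0)].
Proof. by rewrite (mulmx_bool_neq0 (B := fun k i => Tb d k.+1 i.+1)) // => ? ?; rewrite mxE. Qed.

Lemma Rmx_iinf_Tmx_neq0 j :
  ((Rmx R d *m iinf (Tmx R d *m x)) j 0 != 0) =
  [exists i : 'I_(2 ^ d), (i <= j)%N && (0 < x i 0)].
Proof.
rewrite (mulmx_bool_neq0 (B := fun j k => Rb d j.+1 k.+1)); last 2 first.
- by move=> ? ?; rewrite mxE.
- by move=> k; apply: iinf_ge0.
apply/existsP/existsP => [[k /andP[Rjk]] | [i /andP[le_ij xi_gt0]]].
  rewrite iinf_gt0 Tmx_mul_neq0 => /existsP[i /andP[Tki xi_gt0]].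
  by exists i; rewrite xi_gt0 andbT -Rb_Tb_cover; apply/existsP; exists k; rewrite Rjk.
move: le_ij; rewrite -Rb_Tb_cover => /existsP[k /andP[Rjk Tki]].
by exists k; rewrite Rjk iinf_gt0 Tmx_mul_neq0; apply/existsP; exists i; rewrite Tki.
Qed.

Lemma iinf_Rmx_iinf_Tmx :
  iinf (Rmx R d *m iinf (Tmx R d *m x)) =
  \col_j ([exists i : 'I_(2 ^ d), (i <= j)%N && (0 < x i 0)])%:R.
Proof. by apply/matrixP => j z; rewrite ord1 !mxE -Rmx_iinf_Tmx_neq0 mxE. Qed.

End Pipeline.

Unset Implicit Arguments.
Theorem theorem1 (R : realFieldType) (d : nat) (x : 'cV[R]_(2 ^ d)) :
  (1 <= d)%N ->
  (forall i : 'I_(2 ^ d), 0 <= x i 0) ->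
  SPiRiT x = (if (1 <= first_pos x)%N then binrep R d (first_pos x - 1)
              else 0).
Proof.
move=> _ x_ge0; rewrite /SPiRiT iinf_Rmx_iinf_Tmx //.
case: first_posP => [no_pos | c xc_gt0 before_c] /=.
  rewrite (_ : \col_j _ = 0) ?mulmx0 //; apply/matrixP => j z; rewrite !mxE.
  by apply/eqP; rewrite pnatr_eq0 eqb0; apply/existsP => -[i /andP[_]]; apply/negP/no_pos.
rewrite subn1 /= (_ : \col_j _ = \col_j (c <= j)%N%:R); last first.
  by apply/matrixP => j z; rewrite !mxE (exists_pos_le xc_gt0 before_c).
by rewrite Pmx_step Smx_delta.
Qed.
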